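(* A hypergraph ${\cal H}$ is $1$-Sperner if and only if either it has no vertices (that is, ${\cal H}\in\{(\emptyset,\emptyset),(\emptyset,\{\emptyset\})\}$) or it is a safe gluing of two $1$-Sperner hypergraphs each with fewer vertices than ${\cal H}$.
   Context: A hypergraph ${\cal H}=(V,{\cal E})$ consists of a finite vertex set $V$ and a set ${\cal E}$ of subsets of $V$. It is $1$-Sperner if every two distinct hyperedges $e,f$ satisfy $\min\{|e\setminus f|,|f\setminus e|\}=1$. Given vertex-disjoint hypergraphs ${\cal H}_1=(V_1,{\cal E}_1)$, ${\cal H}_2=(V_2,{\cal E}_2)$ and a new vertex $z\notin V_1\cup V_2$, the gluing ${\cal H}_1\odot{\cal H}_2$ has vertex set $V_1\cup V_2\cup\{z\}$ and hyperedge set $\{\{z\}\cup e: e\in{\cal E}_1\}\cup\{V_1\cup e: e\in{\cal E}_2\}$. A gluing is safe if it results in a $1$-Sperner hypergraph; for $1$-Sperner ${\cal H}_1,{\cal H}_2$ this is equivalent to ${\cal E}_1\neq\{V_1\}$ or ${\cal E}_2\neq\{\emptyset\}$. *)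

From mathcomp Require Import all_boot.
Set Implicit Arguments. Unset Strict Implicit. Unset Printing Implicit Defensive.

Definition hypergraph (T : finType) (V : {set T}) (E : {set {set T}}) : Prop :=
  forall e, e \in E -> e \subset V.

Definition one_sperner (T : finType) (E : {set {set T}}) : Prop :=
  forall e f, e \in E -> f \in E -> e != f ->
    minn #|e :\: f| #|f :\: e| = 1.

Definition glue_vertices (T : finType) (V1 V2 : {set T}) (z : T) : {set T} :=
  V1 :|: V2 :|: [set z].

Definition glue_edges (T : finType) (V1 : {set T}) (E1 E2 : {set {set T}})
    (z : T) : {set {set T}} :=
  [set z |: e | e in E1] :|: [set V1 :|: e | e in E2].

Definition safe_gluing (T : finType) (V1 : {set T}) (E1 E2 : {set {set T}})
    (z : T) : Prop :=
  one_sperner (glue_edges V1 E1 E2 z).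

From mathcomp Require Import all_boot zify.
Set Implicit Arguments. Unset Strict Implicit. Unset Printing Implicit Defensive.

(* A nonempty 1-Sperner hypergraph has a vertex z such that every edge through
   z, with z removed, lies inside every edge avoiding z: take e0 of minimum
   size, g of maximum size among the other edges, and z the unique vertex of
   e0 \ g.  Splitting at z then exhibits H as the gluing of H1, whose edges
   are the edges through z with z removed on the vertices common to all
   edges avoiding z, and H2, whose edges are the edges avoiding z with those
   common vertices removed.  Both arise by deleting from the edges a fixed
   set of vertices contained in all of them, which preserves differences of
   edges and hence the 1-Sperner property. *)

Definition splitting_vertex (T : finType) (E : {set {set T}}) (z : T) : Prop :=
  forall e f, e \in E -> f \in E -> z \in e -> z \notin f -> e :\ z \subset f.

Section OneSperner.

Variables (T : finType) (E : {set {set T}}).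
Hypothesis sperE : one_sperner E.

Lemma one_sperner_setD_small e f :
  e \in E -> f \in E -> e != f -> #|e| <= #|f| -> #|e :\: f| = 1.
Proof.
move=> eE fE nef le_ef; have := sperE eE fE nef.
have : #|e :\: f| <= #|f :\: e| by rewrite !cardsD setIC leq_sub2r.
lia.
Qed.

Lemma one_sperner_setD_large e f :
  e \in E -> f \in E -> e != f -> 1 < #|e :\: f| -> #|f :\: e| = 1.
Proof. by move=> eE fE nef; have := sperE eE fE nef; lia. Qed.

Lemma one_sperner_subset_eq e f : e \in E -> f \in E -> e \subset f -> e = f.
Proof.
move=> eE fE sef; apply/eqP/negPn/negP => nef.
by have := sperE eE fE nef; move: sef; rewrite -setD_eq0 => /eqP ->; rewrite cards0 min0n.
Qed.

End OneSperner.

Lemma setD_cards1 (T : finType) (A B : {set T}) x y :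
  #|A :\: B| = 1 -> x \in A :\: B -> y \in A -> y != x -> y \in B.
Proof.
move=> /eqP/cards1P [a defAB] xAB yA nyx; apply/negPn/negP => nyB.
have yAB : y \in A :\: B by rewrite inE nyB yA.
by rewrite defAB !inE in xAB yAB; rewrite (eqP xAB) (eqP yAB) eqxx in nyx.
Qed.

Lemma splitting_vertex_min_max (T : finType) (E : {set {set T}}) e0 g z :
  one_sperner E -> e0 \in E -> g \in E ->
  (forall e, e \in E -> #|e0| <= #|e|) ->
  (forall e, e \in E -> e != e0 -> #|e| <= #|g|) ->
  z \in e0 -> z \notin g -> splitting_vertex E z.
Proof.
move=> sperE e0E gE e0_min g_max ze0 zNg e f eE fE ze zNf.
have sep : forall h k : {set T}, z \in h -> z \notin k -> h != k.
  by move=> h k zh zNk; apply: contraNneq zNk => <-.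
have e0_1 : forall h, h \in E -> e0 != h -> #|e0 :\: h| = 1.
  by move=> h hE nh; rewrite (one_sperner_setD_small sperE) ?e0_min.
(* A vertex w <> z of e outside f would force f \subset g, while w \in g. *)
apply/subsetP => w; rewrite !inE => /andP [wz we]; apply/negPn/negP => wNf.
have ef_2 : 1 < #|e :\: f|.
  have : [set z; w] \subset e :\: f.
    by apply/subsetP => x; rewrite !inE => /orP [] /eqP ->; rewrite ?ze ?we ?zNf ?wNf.
  by move/subset_leq_card; rewrite cards2 eq_sym wz.
have fe_1 := one_sperner_setD_large sperE eE fE (sep _ _ ze zNf) ef_2.
have ne0 : e0 != e.
  by apply: contraTneq ef_2 => <-; rewrite e0_1 // (sep _ _ ze0 zNf).
have eg_1 : #|e :\: g| = 1.
  by apply: (one_sperner_setD_small sperE) (sep _ _ ze zNg) _; rewrite // g_max // eq_sym.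
have [y e0e_y] := cards1P (introT eqP (e0_1 _ eE ne0)).
have [ye0 yNe] : y \in e0 /\ y \notin e.
  by apply/andP; rewrite andbC -in_setD e0e_y set11.
have yz : y != z by apply: contraNneq yNe => ->.
have yf : y \in f.
  by apply: (setD_cards1 (e0_1 _ fE (sep _ _ ze0 zNf)) _ ye0 yz); rewrite inE zNf.
have yg : y \in g.
  by apply: (setD_cards1 (e0_1 _ gE (sep _ _ ze0 zNg)) _ ye0 yz); rewrite inE zNg.
have z_eg : z \in e :\: g by rewrite inE zNg ze.
have wg : w \in g := setD_cards1 eg_1 z_eg we wz.
have sub_fg : f \subset g.
  apply/subsetP => x xf; have [xe | xNe] := boolP (x \in e).
    by apply: (setD_cards1 eg_1 z_eg xe); apply: contraNneq zNf => <-.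
  have [-> // | nxy] := eqVneq x y.
  by move: xNe; rewrite (setD_cards1 fe_1 _ xf nxy) // inE yNe.
by move: wNf; rewrite (one_sperner_subset_eq sperE fE gE sub_fg) wg.
Qed.

Lemma splitting_vertex_exists (T : finType) (V : {set T}) (E : {set {set T}}) :
  hypergraph V E -> one_sperner E -> V != set0 ->
  exists2 z, z \in V & splitting_vertex E z.
Proof.
move=> hypE sperE /set0Pn [v vV].
have [/card_le1_eqP E_le1 | E_gt1] := leqP #|E| 1.
  by exists v => // e f eE fE ze zNf; rewrite (E_le1 e f eE fE) ze in zNf.
have [e1 e1E] : exists e1, e1 \in E by apply/set0Pn; rewrite -card_gt0; lia.
have [e0 e0E e0_min] : exists2 e0 : {set T}, e0 \in E &
    forall e, e \in E -> #|e0| <= #|e|.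
  by case: (arg_minnP (fun e : {set T} => #|e|) e1E) => e0; exists e0.
have [g1 g1E] : exists g1, g1 \in E :\ e0.
  by apply/set0Pn; rewrite -card_gt0; move: E_gt1; rewrite (cardsD1 e0 E) e0E add1n ltnS.
have [g /setD1P [ge0 gE] g_max] : exists2 g : {set T}, g \in E :\ e0 &
    forall e, e \in E :\ e0 -> #|e| <= #|g|.
  by case: (arg_maxnP (fun e : {set T} => #|e|) g1E) => g; exists g.
have e0g : e0 != g by rewrite eq_sym.
have [z e0g_z] := cards1P (introT eqP
  (one_sperner_setD_small sperE e0E gE e0g (e0_min g gE))).
have /setDP [ze0 zNg] : z \in e0 :\: g by rewrite e0g_z set11.
exists z; first exact: subsetP (hypE e0 e0E) z ze0.
apply: (splitting_vertex_min_max sperE e0E gE e0_min _ ze0 zNg).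
by move=> e eE ne0; apply: g_max; rewrite !inE ne0.
Qed.

Lemma setDD_common (T : finType) (A B C : {set T}) :
  C \subset B -> (A :\: C) :\: (B :\: C) = A :\: B.
Proof.
move=> /subsetP sCB; apply/setP => x; rewrite !inE.
by case: (boolP (x \in C)) => [/sCB -> | _]; rewrite ?andbF.
Qed.

Lemma one_sperner_imset (T : finType) (E : {set {set T}}) (P : pred {set T})
    (h : {set T} -> {set T}) :
  one_sperner E ->
  {in E &, forall e f, P e -> P f -> h e :\: h f = e :\: f} ->
  one_sperner [set h e | e in E & P e].
Proof.
move=> sperE hD _ _ /imsetP [e + ->] /imsetP [f + ->].
rewrite !inE => /andP [eE Pe] /andP [fE Pf] nhef.
have nef : e != f by apply: contraNneq nhef => ->.
by rewrite !hD //; apply: sperE.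
Qed.

Section Splitting.

Variables (T : finType) (V : {set T}) (E : {set {set T}}) (z : T).
Hypotheses (hypE : hypergraph V E) (sperE : one_sperner E).
Hypotheses (zV : z \in V) (splitz : splitting_vertex E z).

Let V1 := (V :\ z) :&: \bigcap_(f in E | z \notin f) f.
Let V2 := (V :\ z) :\: V1.
Let E1 := [set e :\ z | e in E & z \in e].
Let E2 := [set f :\: V1 | f in E & z \notin f].

Lemma core_subset f : f \in E -> z \notin f -> V1 \subset f.
Proof. by move=> fE zNf; rewrite subIset // (bigcap_inf f) ?orbT ?fE. Qed.

Lemma core_setUD f : f \in E -> z \notin f -> V1 :|: f :\: V1 = f.
Proof. by move=> fE zNf; rewrite -{1}(setIidPr (core_subset fE zNf)) setID. Qed.

Lemma splitting_glue_edges : E = glue_edges V1 E1 E2 z.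
Proof.
apply/setP => e; rewrite /glue_edges inE; apply/idP/orP.
- move=> eE; have [ze | zNe] := boolP (z \in e).
    left; apply/imsetP; exists (e :\ z); last by rewrite setD1K.
    by apply: imset_f; rewrite inE eE.
  right; apply/imsetP; exists (e :\: V1); first by apply: imset_f; rewrite inE eE.
  by rewrite core_setUD.
- case=> /imsetP [_ /imsetP [f + ->] ->]; rewrite inE => /andP [fE zf].
    by rewrite setD1K.
  by rewrite core_setUD.
Qed.

Lemma splitting_glue_vertices : V = glue_vertices V1 V2 z.
Proof.
have sub_V1 : V1 \subset V :\ z := subsetIl _ _.
by rewrite /glue_vertices /V2 -{1}(setIidPr sub_V1) setID setUC setD1K.
Qed.

Lemma card_core_lt : #|V1| < #|V|.
Proof.
apply: proper_card; apply/properP; split; last by exists z; rewrite // !inE eqxx.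
exact: subset_trans (subsetIl _ _) (subsetDl _ _).
Qed.

Lemma card_rest_lt : #|V2| < #|V|.
Proof.
apply: proper_card; apply/properP; split; last by exists z; rewrite // !inE eqxx.
exact: subset_trans (subsetDl _ _) (subsetDl _ _).
Qed.

Lemma hypergraph_through : hypergraph V1 E1.
Proof.
move=> _ /imsetP [e + ->]; rewrite inE => /andP [eE ze].
rewrite subsetI setSD ?hypE //=; apply/bigcapsP => f /andP [fE zNf].
exact: splitz.
Qed.

Lemma hypergraph_avoiding : hypergraph V2 E2.
Proof.
move=> _ /imsetP [f + ->]; rewrite inE => /andP [fE zNf].
by rewrite setSD // subsetD1 hypE.
Qed.

Lemma one_sperner_through : one_sperner E1.
Proof.
have hD : {in E &, forall e f : {set T},
    z \in e -> z \in f -> e :\ z :\: (f :\ z) = e :\: f}.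
  by move=> e f _ _ _ zf; rewrite setDD_common // sub1set.
exact: (one_sperner_imset sperE hD).
Qed.

Lemma one_sperner_avoiding : one_sperner E2.
Proof.
have hD : {in E &, forall e f : {set T},
    z \notin e -> z \notin f -> e :\: V1 :\: (f :\: V1) = e :\: f}.
  by move=> e f _ fE _ zNf; rewrite setDD_common // core_subset.
exact: (one_sperner_imset sperE hD).
Qed.

Lemma splitting_gluing :
  exists (V1 : {set T}) (E1 : {set {set T}}) (V2 : {set T})
         (E2 : {set {set T}}) (z : T),
    [/\ hypergraph V1 E1, hypergraph V2 E2,
        [disjoint V1 & V2], z \notin V1 :|: V2 &
    [/\ one_sperner E1, one_sperner E2,
        #|V1| < #|V|, #|V2| < #|V| &
    [/\ safe_gluing V1 E1 E2 z,
        V = glue_vertices V1 V2 z &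
        E = glue_edges V1 E1 E2 z]]].
Proof.
exists V1, E1, V2, E2, z; split.
- exact: hypergraph_through.
- exact: hypergraph_avoiding.
- by rewrite disjoint_sym disjoints_subset /V2 setDE subsetIr.
- by rewrite !inE eqxx !andbF.
- split; [exact: one_sperner_through | exact: one_sperner_avoiding |
         exact: card_core_lt | exact: card_rest_lt |].
  split; last exact: splitting_glue_edges.
    by rewrite /safe_gluing -splitting_glue_edges.
  exact: splitting_glue_vertices.
Qed.

End Splitting.

Lemma one_sperner_empty_vertices (T : finType) (E : {set {set T}}) :
  hypergraph set0 E -> one_sperner E.
Proof.
move=> hypE e f eE fE; have := hypE e eE; have := hypE f fE.
by rewrite !subset0 => /eqP -> /eqP ->; rewrite eqxx.
Qed.

Theorem theorem10 (T : finType) (V : {set T}) (E : {set {set T}}) :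
  hypergraph V E ->
  (one_sperner E <->
   (V = set0 \/
    exists (V1 : {set T}) (E1 : {set {set T}}) (V2 : {set T})
           (E2 : {set {set T}}) (z : T),
      [/\ hypergraph V1 E1, hypergraph V2 E2,
          [disjoint V1 & V2], z \notin V1 :|: V2 &
      [/\ one_sperner E1, one_sperner E2,
          #|V1| < #|V|, #|V2| < #|V| &
      [/\ safe_gluing V1 E1 E2 z,
          V = glue_vertices V1 V2 z &
          E = glue_edges V1 E1 E2 z]]])).
Proof.
move=> hypE; split.
- move=> sperE; have [-> | V_neq0] := eqVneq V set0; first by left.
  have [z zV splitz] := splitting_vertex_exists hypE sperE V_neq0.
  by right; exact: splitting_gluing hypE sperE zV splitz.
- case=> [V0 | [V1 [E1 [V2 [E2 [z [_ _ _ _ [_ _ _ _ [safe _ ->]]]]]]]]].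
    by apply: one_sperner_empty_vertices; rewrite -V0.
  exact: safe.
Qed.
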